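(* Let $T$ be a causal theory with explainable symbols $\mathbf{p}$ all of whose rules are D-rules, let $\Pi$ be the conjunction of $\mathrm{tr}_d[R]$ over all rules $R$ of $T$, and let $CC$ be the conjunction of the completeness constraints for $\mathbf{p}$. Then $\mathrm{SM}_{\mathbf{p}\widehat{\mathbf{p}}}[\Pi\land CC]\models T\land CC$.
   Context: A causal theory $T$ consists of a list $\mathbf{p}$ of distinct predicate constants (explainable symbols, not equality) and a finite set of causal rules $F\Leftarrow G$. With predicate variables $u_p$ ($p\in\mathbf{p}$), list $\mathbf{u}$, $T^\dagger(\mathbf{u})$ is the conjunction of $\forall\mathbf{x}(G\to F^{\mathbf{p}}_{\mathbf{u}})$ over the rules ($\mathbf{x}$ the free variables, $F^{\mathbf{p}}_{\mathbf{u}}$ replaces each $p$ by $u_p$), and $T$ is identified with the sentence $\forall\mathbf{u}(T^\dagger(\mathbf{u})\leftrightarrow(\mathbf{u}=\mathbf{p}))$, where $\mathbf{u}=\mathbf{p}$ is $\bigwedge_p\forall\mathbf{x}(u_p(\mathbf{x})\leftrightarrow p(\mathbf{x}))$. A D-rule has the form $\bigvee_{A\in Pos}A\lor\bigvee_{A\in Neg}\neg A\Leftarrow G$ with $Pos,Neg$ finite sets of atoms with predicates in $\mathbf{p}$ and $G$ without $\to$. For $p\in\mathbf{p}$, $\widehat p$ is a new predicate constant of the same arity; for $A=p(\mathbf{t})$, $\widehat A=\widehat p(\mathbf{t})$. $\mathrm{tr}_d$ of the D-rule is $\widetilde\forall\big(\neg\neg G\land\bigwedge_{A\in Pos}(\widehat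 A\lor\neg\widehat A)\land\bigwedge_{A\in Neg}(A\lor\neg A)\to\bigvee_{A\in Pos}A\lor\bigvee_{A\in Neg}\widehat A\big)$ ($\widetilde\forall$ = universal closure). $CC$ is the conjunction over $p\in\mathbf{p}$ of $\forall\mathbf{x}\neg(p(\mathbf{x})\land\widehat p(\mathbf{x}))$ and $\forall\mathbf{x}\neg(\neg p(\mathbf{x})\land\neg\widehat p(\mathbf{x}))$. For a logic program $F$ (conjunction of sentences $\widetilde\forall(F_1\to F_2)$ with no other $\to$), $\mathrm{SM}_{\mathbf{p}\widehat{\mathbf{p}}}[F]$ is $F\land\neg\exists\mathbf{u}\widehat{\mathbf{u}}\big(((\mathbf{u},\widehat{\mathbf{u}})<(\mathbf{p},\widehat{\mathbf{p}}))\land F^\diamond(\mathbf{u},\widehat{\mathbf{u}})\big)$, where $\widehat{\mathbf{u}}=(\widehat u_p)$ are further predicate variables, $F^\diamond$ replaces each occurrence of $p$ / $\widehat p$ not in the scope of $\neg$ by $u_p$ / $\widehat u_p$, $p\le q$ is $\forall\mathbf{x}(p(\mathbf{x})\to q(\mathbf{x}))$ (componentwise for tuples) and $\mathbf{a}<\mathbf{b}$ is $(\mathbf{a}\le\mathbf{b})\land\neg(\mathbf{b}\le\mathbf{a})$. $\models$ is classical (second-order) entailment. *)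

From mathcomp Require Import all_boot.
From Stdlib Require List.

Set Implicit Arguments.
Unset Strict Implicit.
Unset Printing Implicit Defensive.

Section Syntax.
(* function constants (object constants are 0-ary function constants) *)
Variables (Fn : Type) (far : Fn -> nat).

Inductive term : Type :=
| Var of nat
| App (f : Fn) of ('I_(far f) -> term).

Variables (S : Type) (sar : S -> nat).

(* negation is a primitive connective (so that "without ->" and "not in the
   scope of negation" are syntactic notions, as in the paper). *)
Inductive formula : Type :=
| FBot
| FTop
| FAtom (s : S) of ('I_(sar s) -> term)
| FEq of term & term
| FNeg of formula
| FAnd of formula & formula
| FOr of formula & formula
| FImp of formula & formula
| FAll of nat & formula
| FEx of nat & formula.

Fixpoint noImp (phi : formula) : bool :=
  match phi with
  | FBot | FTop | FAtom _ _ | FEq _ _ => true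
  | FNeg f => noImp f
  | FAnd a b | FOr a b => noImp a && noImp b
  | FImp _ _ => false
  | FAll _ f | FEx _ f => noImp f
  end.

Definition bigAnd (l : seq formula) : formula := foldr FAnd FTop l.
Definition bigOr (l : seq formula) : formula := foldr FOr FBot l.

Record atom := Atm { apred : S; aargs : 'I_(sar apred) -> term }.

Definition atomF (a : atom) : formula := @FAtom (apred a) (@aargs a).

End Syntax.

Section Semantics.
Variables (Fn : Type) (far : Fn -> nat) (S : Type) (sar : S -> nat) (D : Type).

Definition finterp := forall f : Fn, ('I_(far f) -> D) -> D.
(* interpretation (or value of a list of predicate variables) of the
   predicate symbols: an (sar s)-ary relation for each s *)
Definition pinterp := forall s : S, ('I_(sar s) -> D) -> Prop.

Fixpoint teval (If : finterp) (e : nat -> D) (t : term far) : D :=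
  match t with
  | Var x => e x
  | App f ts => If f (fun i => teval If e (ts i))
  end.

Definition upd (e : nat -> D) (x : nat) (d : D) : nat -> D :=
  fun y => if y == x then d else e y.

(* With Iout = Iin this is ordinary satisfaction; with
   Iout = I[p := u] and Iin = I it is the truth of F^diamond(u). *)
Fixpoint sat2 (If : finterp) (Iout Iin : pinterp) (e : nat -> D)
    (phi : formula far sar) : Prop :=
  match phi with
  | FBot => False
  | FTop => True
  | FAtom s ts => Iout s (fun i => teval If e (ts i))
  | FEq t1 t2 => teval If e t1 = teval If e t2
  | FNeg f => ~ sat2 If Iin Iin e f
  | FAnd a b => sat2 If Iout Iin e a /\ sat2 If Iout Iin e b
  | FOr a b => sat2 If Iout Iin e a \/ sat2 If Iout Iin e b
  | FImp a b => sat2 If Iout Iin e a -> sat2 If Iout Iin e b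
  | FAll x f => forall d, sat2 If Iout Iin (upd e x d) f
  | FEx x f => exists d, sat2 If Iout Iin (upd e x d) f
  end.

Definition sat (If : finterp) (I : pinterp) (e : nat -> D) (phi : formula far sar) :=
  sat2 If I I e phi.

Definition satc (If : finterp) (I : pinterp) (phi : formula far sar) :=
  forall e, sat If I e phi.

Definition satP (If : finterp) (I : pinterp) (F : seq (formula far sar)) :=
  forall phi, List.In phi F -> satc If I phi.

Definition pupd (I u : pinterp) (q : pred S) : pinterp :=
  fun s x => if q s then u s x else I s x.

Definition ple (q : pred S) (u v : pinterp) :=
  forall s, q s -> forall x, u s x -> v s x.
Definition plt (q : pred S) (u v : pinterp) := ple q u v /\ ~ ple q v u.
Definition peq (q : pred S) (u v : pinterp) :=
  forall s, q s -> forall x, u s x <-> v s x.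

Definition SM (If : finterp) (I : pinterp) (q : pred S) (F : seq (formula far sar)) :=
  satP If I F /\
  ~ (exists u : pinterp, plt q u I /\
       forall phi, List.In phi F -> forall e, sat2 If (pupd I u q) I e phi).

End Semantics.

Section Causal.
Variables (Fn : Type) (far : Fn -> nat) (P : eqType) (par : P -> nat).

(* D-rule  \/Pos A \/ \/Neg ~A <= G *)
Record drule := DRule {
  dpos : seq (atom far par);
  dneg : seq (atom far par);
  dbody : formula far par }.

Definition dhead (R : drule) : formula far par :=
  FOr (bigOr [seq atomF a | a <- dpos R]) (bigOr [seq FNeg (atomF a) | a <- dneg R]).

Definition is_Drule (ps : seq P) (R : drule) : Prop :=
  (forall a, List.In a (dpos R) -> apred a \in ps) /\
  (forall a, List.In a (dneg R) -> apred a \in ps) /\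
  noImp (dbody R).

Definition causal_dagger (D : Type) (If : finterp far D) (I u : pinterp par D)
    (ps : seq P) (T : seq drule) : Prop :=
  forall R, List.In R T -> forall e,
    sat If I e (dbody R) -> sat If (pupd I u (fun p => p \in ps)) e (dhead R).

Definition causal_sat (D : Type) (If : finterp far D) (I : pinterp par D)
    (ps : seq P) (T : seq drule) : Prop :=
  forall u : pinterp par D,
    causal_dagger If I u ps T <-> peq (fun p => p \in ps) u I.

(* extended signature: inl p = p, inr p = \hat p *)
Definition hsar (s : P + P) : nat := match s with inl p => par p | inr p => par p end.

Definition hatq (ps : seq P) : pred (P + P) :=
  fun s => match s with inl p => p \in ps | inr p => p \in ps end.

Fixpoint lift (phi : formula far par) : formula far hsar :=
  match phi with
  | FBot => FBot _ _
  | FTop => FTop _ _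
  | FAtom s ts => @FAtom _ _ _ hsar (inl s) ts
  | FEq t1 t2 => FEq _ t1 t2
  | FNeg f => FNeg (lift f)
  | FAnd a b => FAnd (lift a) (lift b)
  | FOr a b => FOr (lift a) (lift b)
  | FImp a b => FImp (lift a) (lift b)
  | FAll x f => FAll x (lift f)
  | FEx x f => FEx x (lift f)
  end.

Definition liftA (a : atom far par) : formula far hsar :=
  @FAtom _ _ _ hsar (inl (apred a)) (@aargs _ _ _ _ a).
Definition hatA (a : atom far par) : formula far hsar :=
  @FAtom _ _ _ hsar (inr (apred a)) (@aargs _ _ _ _ a).

(* tr_d of a D-rule (its universal closure is taken by satc / SM) *)
Definition trd (R : drule) : formula far hsar :=
  FImp
    (FAnd (FNeg (FNeg (lift (dbody R))))
      (FAnd (bigAnd [seq FOr (hatA a) (FNeg (hatA a)) | a <- dpos R])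
            (bigAnd [seq FOr (liftA a) (FNeg (liftA a)) | a <- dneg R])))
    (FOr (bigOr [seq liftA a | a <- dpos R]) (bigOr [seq hatA a | a <- dneg R])).

Definition vars (n : nat) : 'I_n -> term far := fun i => Var far (nat_of_ord i).

Definition CC1 (p : P) : formula far hsar :=
  FNeg (FAnd (@FAtom _ _ _ hsar (inl p) (@vars (par p)))
             (@FAtom _ _ _ hsar (inr p) (@vars (par p)))).
Definition CC2 (p : P) : formula far hsar :=
  FNeg (FAnd (FNeg (@FAtom _ _ _ hsar (inl p) (@vars (par p))))
             (FNeg (@FAtom _ _ _ hsar (inr p) (@vars (par p))))).

Definition CC (ps : seq P) : seq (formula far hsar) :=
  flatten [seq [:: CC1 p; CC2 p] | p <- ps].

Definition PiD (T : seq drule) : seq (formula far hsar) := [seq trd R | R <- T].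

End Causal.

From Pilot Require Import Defs.
From mathcomp Require Import all_boot.
From Stdlib Require List.
From Stdlib Require Import Classical FunctionalExtensionality.

Set Implicit Arguments.
Unset Strict Implicit.
Unset Printing Implicit Defensive.

(* The completeness constraints force \hat p to be the complement of p in every
   model of them.  Given u with T^dagger(u), the interpretation v which keeps
   p only where u holds and \hat p only where u fails lies below I and
   satisfies (Pi /\ CC)^diamond; minimality of I then forces I <= v, i.e.
   p <= u and \hat p <= ~u, so u = p.  Conversely, for u = p the antecedent of
   each tr_d[R] reduces to G (the excluded-middle conjuncts become trivial)
   and its consequent to the head of R, so T^dagger(p) holds. *)

Section Satisfaction.
Variables (Fn : Type) (far : Fn -> nat) (S : Type) (sar : S -> nat) (D : Type).
Variable If : finterp far D.

Lemma sat2_bigOr (A : Type) (f : A -> formula far sar) (l : seq A) Io Ii e :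
  sat2 If Io Ii e (bigOr (map f l)) <-> exists2 a, List.In a l & sat2 If Io Ii e (f a).
Proof.
elim: l => [|a l IH] /=; first by split=> [[]|[]].
rewrite IH; split=> [[H|[b Hb H]]|[b [<-|Hb] H]];
  by [exists a; auto | exists b; auto | left | right; exists b].
Qed.

Lemma sat2_bigAnd (A : Type) (f : A -> formula far sar) (l : seq A) Io Ii e :
  sat2 If Io Ii e (bigAnd (map f l)) <-> forall a, List.In a l -> sat2 If Io Ii e (f a).
Proof.
elim: l => [|a l IH] /=; first by split.
rewrite IH; split=> [[Ha Hl] b [<-|Hb]|H]; auto.
Qed.

Lemma teval_vars_surj (n : nat) (x : 'I_n -> D) : inhabited D ->
  exists e, (fun i => teval If e (@vars _ far n i)) = x.
Proof.
case=> d0; exists (fun m => if insub m is Some i then x i else d0).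
apply: functional_extensionality => i /=.
by rewrite (insubT (fun m => m < n) (ltn_ord i)); congr x; apply: val_inj.
Qed.

End Satisfaction.

Section Causal.
Variables (Fn : Type) (far : Fn -> nat) (P : eqType) (par : P -> nat) (D : Type).
Variable If : finterp far D.

Lemma sat2_lift (f : formula far par) (Io Ii : pinterp (hsar par) D) e :
  sat2 If Io Ii e (Defs.lift f) <-> sat2 If (fun p => Io (inl p)) (fun p => Ii (inl p)) e f.
Proof.
elim: f Io Ii e => /= [||s ts|t1 t2|f IH|a IHa b IHb|a IHa b IHb|a IHa b IHb|x f IH|x f IH]
  Io Ii e //.
- by rewrite IH.
- by rewrite IHa IHb.
- by rewrite IHa IHb.
- by rewrite IHa IHb.
- by split=> H d; apply/IH.
- by split=> [[d /IH]|[d /IH]]; exists d.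
Qed.

Variable ps : seq P.

Lemma CC_mem p : p \in ps ->
  List.In (CC1 far par p) (CC far par ps) /\ List.In (CC2 far par p) (CC far par ps).
Proof.
elim: ps => [|a s IH] //; rewrite in_cons /CC /= -/(CC far par s).
by case/orP=> [/eqP ->|/IH []]; auto.
Qed.

(* The constraints are negations, so F^diamond coincides with F on them. *)
Lemma sat2_CC phi Io Ii e : List.In phi (CC far par ps) ->
  sat2 If Io Ii e phi <-> sat If Ii e phi.
Proof.
elim: ps => [|a s IH] //; rewrite /CC /= -/(CC far par s).
by case=> [<-|[<-|/IH]].
Qed.

Definition complementary (I : pinterp (hsar par) D) :=
  forall p, p \in ps -> forall x, I (inr p) x <-> ~ I (inl p) x.

Lemma CC_complementary I : inhabited D ->
  satP If I (CC far par ps) -> complementary I.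
Proof.
move=> HD HCC p Hp x; have [e He] := teval_vars_surj If x HD.
have [H1 H2] := CC_mem Hp.
by have := HCC _ H1 e; have := HCC _ H2 e; rewrite /sat /= He; tauto.
Qed.

Variables (T : seq (drule far par)) (HT : forall R, List.In R T -> is_Drule ps R).
Variable I : pinterp (hsar par) D.
Arguments I : clear implicits.
Hypothesis Icompl : complementary I.

Lemma dagger_of_peq (u : pinterp par D) :
  (forall R, List.In R T -> satc If I (trd R)) ->
  peq (fun p => p \in ps) u (fun p => I (inl p)) ->
  causal_dagger If (fun p => I (inl p)) u ps T.
Proof.
move=> HPi Hu R HR e Hb; have [Hpos [Hneg _]] := HT HR.
have [] := HPi R HR e.
- split; first by apply; apply/sat2_lift.
  by split; apply/sat2_bigAnd => a _ /=; tauto.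
- case/sat2_bigOr=> a Ha HIa; left; apply/sat2_bigOr; exists a => //.
  by rewrite /atomF /pupd /= (Hpos a Ha); apply/Hu; first exact: Hpos.
- case/sat2_bigOr=> a Ha HIa; right; apply/sat2_bigOr; exists a => //.
  move: HIa; rewrite /atomF /pupd /= (Hneg a Ha) (Icompl (Hneg a Ha)).
  by move=> HnI /(Hu _ (Hneg a Ha)).
Qed.

Definition split_by (u : pinterp par D) : pinterp (hsar par) D := fun s =>
  match s as s0 return ('I_(hsar par s0) -> D) -> Prop with
  | inl p => fun x => I (inl p) x /\ u p x
  | inr p => fun x => I (inr p) x /\ ~ u p x
  end.

Lemma split_by_le u : ple (hatq ps) (split_by u) I.
Proof. by case=> p _ x []. Qed.

Lemma peq_of_split_by_ge u :
  ple (hatq ps) I (split_by u) -> peq (fun p => p \in ps) u (fun p => I (inl p)).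
Proof.
move=> HIv p Hp x; split=> [Hu|/(HIv (inl p) Hp) [] //].
by apply: NNPP => HnI; case: (HIv (inr p) Hp x); [apply/Icompl|].
Qed.

Lemma trd_diamond_split_by u :
  causal_dagger If (fun p => I (inl p)) u ps T ->
  forall R, List.In R T -> forall e,
    sat2 If (pupd I (split_by u) (hatq ps)) I e (trd R).
Proof.
move=> Hdag R HR e [Hnn [/sat2_bigAnd Hp /sat2_bigAnd Hn]].
have [Hpos [Hneg _]] := HT HR.
have Hb : sat If (fun p => I (inl p)) e (dbody R).
  by apply: NNPP => Hb; apply: Hnn => /sat2_lift.
case: (Hdag R HR e Hb) => /sat2_bigOr [a Ha Hua]; [left|right];
  apply/sat2_bigOr; exists a => //.
- move: Hua (Hp a Ha); rewrite /atomF /pupd /= (Hpos a Ha) (Icompl (Hpos a Ha)).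
  by move=> Hua; tauto.
- move: Hua (Hn a Ha); rewrite /atomF /pupd /= (Hneg a Ha) (Icompl (Hneg a Ha)).
  by move=> Hua; tauto.
Qed.

End Causal.

Theorem lemma5
  (Fn : Type) (far : Fn -> nat) (P : eqType) (par : P -> nat)
  (ps : seq P) (Hps : uniq ps)
  (T : seq (drule far par)) (HT : forall R, List.In R T -> is_Drule ps R)
  (D : Type) (HD : inhabited D) (If : finterp far D) (I : pinterp (hsar par) D) :
  SM If I (hatq ps) (PiD T ++ CC far par ps) ->
  causal_sat If (fun p => I (inl p)) ps T /\ satP If I (CC far par ps).
Proof.
case=> HPiCC Hmin.
have HCC : satP If I (CC far par ps).
  by move=> phi Hphi; apply: HPiCC; apply/List.in_app_iff; right.
have HPi : forall R, List.In R T -> satc If I (trd R).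
  by move=> R HR; apply: HPiCC; apply/List.in_app_iff; left; apply/List.in_map_iff; exists R.
have Icompl := CC_complementary HD HCC.
split=> // u; split; last exact: dagger_of_peq.
move=> Hdag; apply: peq_of_split_by_ge => //; apply: NNPP => HnotI.
apply: Hmin; exists (split_by I u); split; first by split; [apply: split_by_le|].
move=> phi /List.in_app_iff [/List.in_map_iff [R [<- HR]]|Hc] e.
- exact: (trd_diamond_split_by HT Icompl Hdag HR).
- by rewrite (sat2_CC If _ _ _ Hc); apply: HCC.
Qed.
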